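(* Let $G$ be a non-Mengerian graph and let $xy$ be a multiedge of $G$. Then the graph obtained from $G$ by m-subdividing $xy$ is also non-Mengerian.
   Context: Graphs are finite, loopless, and may have parallel edges. The multiplicity of a pair $x,y$ is the number of edges with endpoints $x,y$; a pair with multiplicity at least 1 is a multiedge. m-subdividing a multiedge $xy$ of multiplicity $k$ means: delete the $k$ edges between $x$ and $y$, add a new vertex $z$, add $k$ parallel edges between $x$ and $z$ and $k$ parallel edges between $z$ and $y$. A temporal graph is a pair $(G,\lambda)$ with $\lambda:E(G)\to\mathbb{Z}_{>0}$. A temporal $s,t$-path is an $s,t$-path $(s=v_1,e_1,\dots,e_{k-1},v_k=t)$ of $G$ (no repeated vertices) with $\lambda(e_1)\le\dots\le\lambda(e_{k-1})$. Two temporal $s,t$-paths are disjoint if they share no vertex other than $s,t$. For distinct non-adjacent $s,t$, a temporal $s,t$-vertex cut is a set $S\subseteq V(G)\setminus\{s,t\}$ such that $G-S$ (with $\lambda$ restricted) has no temporal $s,t$-path. $p_{G,\lambda}(s,t)$ is the maximum number of pairwise disjoint temporal $s,t$-paths and $c_{G,\lambda}(s,t)$ the minimum size of a temporal $s,t$-vertex cut. $G$ is Mengerian if $p_{G,\lambda}(s,t)=c_{G,\lambda}(s,t)$ for every $\lambda$ and every pair of distinct non-adjacent $s,t\in V(G)$. *)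

From mathcomp Require Import all_boot.
From mathcomp Require Import boolp.
Set Implicit Arguments. Unset Strict Implicit. Unset Printing Implicit Defensive.

(* A (finite, loopless) multigraph is given by a finite vertex type V, a
   finite edge type E and an endpoint map ends : E -> V * V, with the
   looplessness condition (ends e).1 != (ends e).2.  Parallel edges are
   distinct elements of E with the same endpoints. *)

Section TemporalGraphs.
Variables (V E : finType) (ends : E -> V * V).

Definition loopless := forall e, (ends e).1 != (ends e).2.

Definition joins (e : E) (u v : V) : bool :=
  (ends e == (u, v)) || (ends e == (v, u)).

Definition adjacent (u v : V) : Prop := exists e, joins e u v.

(* A walk from u is encoded by the list of steps (e_i, v_{i+1}):
   the walk is u = v_1, e_1, v_2, ..., e_{k-1}, v_k. *)
Fixpoint walk_ok (u : V) (p : seq (E * V)) : bool :=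
  if p is st :: p' then joins st.1 u st.2 && walk_ok st.2 p' else true.

Definition pverts (s : V) (p : seq (E * V)) : seq V := s :: map snd p.

Definition temporal_path (lam : E -> nat) (s t : V) (p : seq (E * V)) : bool :=
  [&& walk_ok s p, uniq (pverts s p), last s (map snd p) == t
    & sorted leq (map (fun st => lam st.1) p)].

Definition disjoint_paths (s t : V) (p q : seq (E * V)) : bool :=
  all (fun v => (v \notin pverts s q) || (v == s) || (v == t)) (pverts s p).

Definition has_disjoint_paths (lam : E -> nat) (s t : V) (k : nat) : Prop :=
  exists ps : seq (seq (E * V)),
    [/\ size ps = k, all (temporal_path lam s t) ps &
        forall i j, i < k -> j < k -> i != j ->
          disjoint_paths s t (nth [::] ps i) (nth [::] ps j)].

(* S is a temporal s,t-vertex cut: S avoids s,t and G - S has no temporal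
   s,t-path (a path of G - S is a path of G avoiding S) *)
Definition temporal_cut (lam : E -> nat) (s t : V) (S : {set V}) : Prop :=
  [/\ s \notin S, t \notin S &
      ~ exists p, temporal_path lam s t p && all (fun v => v \notin S) (pverts s p)].

(* p_{G,lam}(s,t): maximum number of pairwise disjoint temporal paths
   (any such family has at most #|V| members, as s,t are non-adjacent) *)
Definition pmax (lam : E -> nat) (s t : V) : nat :=
  \max_(k < #|V|.+1 | `[< has_disjoint_paths lam s t k >]) k.

(* c_{G,lam}(s,t): minimum size of a temporal s,t-vertex cut
   (V \ {s,t} is always a cut for non-adjacent s,t, so the min is < #|V|) *)
Definition cmin (lam : E -> nat) (s t : V) : nat :=
  \big[minn/#|V|]_(S : {set V} | `[< temporal_cut lam s t S >]) #|S|.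

Definition Mengerian : Prop :=
  forall lam : E -> nat, (forall e, 0 < lam e) ->
  forall s t : V, s != t -> ~ adjacent s t -> pmax lam s t = cmin lam s t.

End TemporalGraphs.

(* m-subdivision of the multiedge xy: new vertex z = None; every edge e
   between x and y becomes an edge x z (inl e) and an edge z y (inr e);
   all other edges are unchanged. *)
Section MSubdivide.
Variables (V E : finType) (ends : E -> V * V) (x y : V).

Definition xy_edge (e : E) : bool := joins ends e x y.

Definition msub_edge : finType := (E + {e : E | xy_edge e})%type.

Definition msub_ends (f : msub_edge) : option V * option V :=
  match f with
  | inl e => if xy_edge e then (Some x, None)
             else (Some (ends e).1, Some (ends e).2)
  | inr e => (None, Some y)
  end.

End MSubdivide.

From mathcomp Require Import all_boot boolp.
Set Implicit Arguments. Unset Strict Implicit. Unset Printing Implicit Defensive.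

(* Give each half of a subdivided edge the label of the edge it comes from.
   Dropping the new vertex z from a temporal path of the subdivision gives a
   temporal path of G, so p cannot grow.  Conversely, from a temporal cut of
   the subdivision keep the old vertices and replace z by an endpoint w of xy
   outside {s, t}: a temporal path of G avoiding this set lifts to one of the
   subdivision avoiding the cut, because its lift meets z only if it uses an
   xy edge, and then it passes through w.  So c cannot shrink, and with the
   weak duality p <= c, equality p = c for the subdivision forces p = c for G. *)

Section Multigraphs.
Variables (V E : finType) (ends : E -> V * V).

Lemma joinsC (e : E) (u v : V) : joins ends e u v = joins ends e v u.
Proof. exact: orbC. Qed.

Lemma loopless_joins_neq e u v : loopless ends -> joins ends e u v -> u != v.
Proof.
move=> lless; rewrite /joins; have := lless e.
by case: (ends e) => a b /= neq_ab /orP[]/eqP[<- <-]; rewrite // eq_sym.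
Qed.

End Multigraphs.

Section PathsAndCuts.
Variables (V E : finType) (ends : E -> V * V) (lam : E -> nat) (s t : V).

Lemma disjoint_paths_le_cut k (S : {set V}) :
  has_disjoint_paths ends lam s t k -> temporal_cut ends lam s t S -> k <= #|S|.
Proof.
case=> ps [size_ps ps_temporal ps_disjoint] [sNS tNS no_path].
have path_hits_S i : i < k -> has (mem S) (pverts s (nth [::] ps i)).
  move=> lt_ik; apply/negPn/negP => miss; apply: no_path; exists (nth [::] ps i).
  apply/andP; split; first by apply: (allP ps_temporal); rewrite mem_nth ?size_ps.
  by apply/allP => v pv; apply: contra miss => vS; apply/hasP; exists v.
pose f (i : 'I_k) := let l := pverts s (nth [::] ps i) in nth s l (find (mem S) l).
have fS i : f i \in S by apply: nth_find; apply: path_hits_S.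
have f_on_path i : f i \in pverts s (nth [::] ps i).
  by apply: mem_nth; rewrite -has_find path_hits_S.
have f_inj : injective f.
  move=> i j eq_fij; apply: val_inj; apply/eqP/negPn/negP => neq_ij.
  have := allP (ps_disjoint i j (ltn_ord i) (ltn_ord j) neq_ij) (f i) (f_on_path i).
  rewrite eq_fij f_on_path /=.
  by case/orP => /eqP fj; [move: sNS | move: tNS]; rewrite -fj fS.
rewrite -[k]card_ord -(card_imset _ f_inj); apply: subset_leq_card.
by apply/subsetP => _ /imsetP[i _ ->].
Qed.

Lemma cmin_le_cut (S : {set V}) :
  temporal_cut ends lam s t S -> cmin ends lam s t <= #|S|.
Proof.
move=> cut_S; rewrite /cmin; move: (mem_index_enum S).
elim: (index_enum _) => [//|S' r IHr]; rewrite inE big_cons.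
case/orP => [/eqP <- | S_r]; first by rewrite asboolT // geq_minl.
by case: ifP => _; [apply: leq_trans (geq_minr _ _) _ |]; apply: IHr.
Qed.

Lemma cmin_le_card : cmin ends lam s t <= #|V|.
Proof.
apply: (big_ind (fun m => m <= #|V|)) => // [m n le_m _|S _].
  exact: leq_trans (geq_minl m n) le_m.
exact: max_card.
Qed.

Lemma leq_cmin n :
  n <= #|V| -> (forall S, temporal_cut ends lam s t S -> n <= #|S|) ->
  n <= cmin ends lam s t.
Proof.
move=> le_n_V le_n_cuts; apply: (big_ind (fun m => n <= m)) => //.
  by move=> m1 m2 le_n_m1 le_n_m2; rewrite leq_min le_n_m1.
by move=> S /asboolP; apply: le_n_cuts.
Qed.

Hypotheses (neq_st : s != t) (nadj_st : ~ adjacent ends s t).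

Lemma temporal_cut_inner : temporal_cut ends lam s t (~: [set s; t]).
Proof.
split; rewrite ?in_setC ?in_set2 ?eqxx ?orbT //.
case=> [[|[e v] p]] /andP[/and4P[walk_p uniq_p last_p _] avoid_p] /=.
  by move: last_p; rewrite /= (negbTE neq_st).
move: walk_p uniq_p avoid_p => /= /andP[join_e _] /andP[sNp _] /and3P[_ vNS _].
move: vNS; rewrite in_setC in_set2 negbK => /orP[/eqP eq_vs | /eqP eq_vt].
  by move: sNp; rewrite in_cons eq_vs eqxx.
by apply: nadj_st; exists e; rewrite -eq_vt.
Qed.

Lemma disjoint_paths_le_card k : has_disjoint_paths ends lam s t k -> k <= #|V|.
Proof.
move=> paths_k.
exact: leq_trans (disjoint_paths_le_cut paths_k temporal_cut_inner) (max_card _).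
Qed.

Lemma leq_pmax k : has_disjoint_paths ends lam s t k -> k <= pmax ends lam s t.
Proof.
move=> paths_k; have lt_k : k < #|V|.+1 by rewrite ltnS disjoint_paths_le_card.
by apply: (@leq_bigmax_cond _ _ _ (Ordinal lt_k)); apply/asboolP.
Qed.

Lemma pmax_le_cmin : pmax ends lam s t <= cmin ends lam s t.
Proof.
apply/bigmax_leqP => k /asboolP paths_k.
apply: leq_cmin => [|S]; first exact: disjoint_paths_le_card.
exact: disjoint_paths_le_cut.
Qed.

End PathsAndCuts.

Lemma last_pmap_id (T : Type) (s : T) (a : option T) (l : seq (option T)) (t : T) :
  last a l = Some t -> last (odflt s a) (pmap id l) = t.
Proof.
elim: l s a => [|[b|] l IHl] s a /=; first by move->.
  exact: (IHl b (Some b)).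
exact: (IHl _ None).
Qed.

Lemma card_set_option (T : finType) (S : {set option T}) :
  #|S| = (None \in S) + #|[set v | Some v \in S]|.
Proof.
rewrite (cardsD1 None); congr (_ + _); rewrite -[RHS](card_imset _ (@Some_inj _)).
apply: eq_card => -[v|]; rewrite !inE /=.
  by rewrite mem_imset ?inE //; apply: Some_inj.
by apply/esym/imsetP => -[].
Qed.

Section Subdivision.
Variables (V E : finType) (ends : E -> V * V) (x y : V).

Local Notation sends := (@msub_ends V E ends x y).
Local Notation sedge := (msub_edge ends x y).

Lemma joins_xy_edge (e : E) (u v : V) :
  xy_edge ends x y e -> joins ends e u v ->
  ((u == x) && (v == y)) || ((u == y) && (v == x)).
Proof.
rewrite /xy_edge /joins; case: (ends e) => a b; rewrite !xpair_eqE.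
by case/orP=> /andP[/eqP-> /eqP->]; case/orP=> /andP[/eqP-> /eqP->]; rewrite !eqxx ?orbT.
Qed.

Definition msub_orig (f : sedge) : E := match f with inl e => e | inr e => val e end.

Lemma joins_msubE (f : sedge) (a b : option V) :
  joins sends f a b =
  match f with
  | inl e =>
      if xy_edge ends x y e then
        ((a == Some x) && (b == None)) || ((a == None) && (b == Some x))
      else if (a, b) is (Some u, Some v) then joins ends e u v else false
  | inr _ => ((a == None) && (b == Some y)) || ((a == Some y) && (b == None))
  end.
Proof.
rewrite /joins; case: f => [e|e] /=; last first.
  by case: a => [a|]; case: b => [b|]; rewrite /= ?xpair_eqE /= ?andbF ?andbT ?orbF // eq_sym.
case: ifP => _.
  by case: a => [a|]; case: b => [b|]; rewrite /= ?xpair_eqE /= ?andbF ?andbT ?orbF // eq_sym.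
by case: (ends e) => [e1 e2]; case: a => [a|]; case: b => [b|]; rewrite /= ?xpair_eqE ?andbF.
Qed.

Definition msub_project (p : seq (sedge * option V)) : seq (E * V) :=
  pmap (fun st => if st.2 is Some v then Some (msub_orig st.1, v) else None) p.

Lemma map_snd_project p : map snd (msub_project p) = pmap id (map snd p).
Proof. by elim: p => [//|[f [v|]] p IHp] /=; rewrite IHp. Qed.

Lemma mem_pverts_project s p v :
  (v \in pverts s (msub_project p)) = (Some v \in pverts (Some s) p).
Proof.
by rewrite /pverts map_snd_project -[s :: _]/(pmap id (Some s :: _)) mem_pmap map_id.
Qed.

(* At the subdivision vertex ([a = None]), [u] is the endpoint of [xy] the walk
   came from; uniqueness makes it leave through the other endpoint. *)
Lemma walk_project u (a : option V) p :
  walk_ok sends a p -> uniq (a :: map snd p) ->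
  (if a is Some w then w == u else (u \in [:: x; y]) && (Some u \notin map snd p)) ->
  walk_ok ends u (msub_project p).
Proof.
elim: p u a => [//|[f b] p IHp] u a /= /andP[join_f walk_p] /andP[aNp uniq_p] inv_a.
rewrite joins_msubE in join_f.
case: b join_f walk_p aNp uniq_p inv_a => [v|] join_f walk_p aNp uniq_p inv_a /=.
  rewrite (IHp v (Some v)) // andbT.
  case: a join_f aNp inv_a => [w|] join_f aNp inv_a.
    rewrite -(eqP inv_a).
    by case: f join_f => [e|e] /=; [case: xy_edge|]; rewrite ?andbF.
  move: inv_a; rewrite !inE negb_or => /andP[u_xy /andP[neq_uv _]].
  case: f join_f => [e|e] /=; last first.
    rewrite orbF => /eqP[eq_vy]; subst v.
    by case/orP: u_xy neq_uv => /eqP-> => [_|]; [apply: (valP e) | rewrite eqxx].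
  case: ifP => // xy_e /= /eqP[eq_vx]; subst v.
  by case/orP: u_xy neq_uv => /eqP-> => [|_]; [rewrite eqxx | rewrite joinsC].
apply: IHp walk_p uniq_p _.
case: a join_f aNp inv_a => [w|] join_f aNp; last by case: f join_f => //= e; case: ifP.
move/eqP=> eq_wu; subst w; move: aNp; rewrite inE negb_or => /andP[_ ->].
rewrite andbT; case: f join_f => [e|e] /=; first case: xy_edge => //.
all: by rewrite eqxx ?orbF andbT => /eqP[->]; rewrite !inE eqxx ?orbT.
Qed.

Lemma temporal_project (lam : E -> nat) s t p :
  temporal_path sends (lam \o msub_orig) (Some s) (Some t) p ->
  temporal_path ends lam s t (msub_project p).
Proof.
case/and4P => walk_p uniq_p /eqP last_p sorted_p; apply/and4P; split.
- by apply: walk_project walk_p uniq_p _.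
- rewrite /pverts map_snd_project -[s :: _]/(pmap id (Some s :: _)).
  by apply: (pmap_uniq (g := Some)) => // - [].
- by rewrite map_snd_project; apply/eqP/(last_pmap_id s last_p).
- apply: subseq_sorted sorted_p; first exact: leq_trans.
  elim: p {walk_p uniq_p last_p} => [//|[f [v|]] p IHp] /=; first by rewrite eqxx.
  exact: subseq_trans IHp (subseq_cons _ _).
Qed.

Lemma disjoint_project s t p q :
  disjoint_paths (Some s) (Some t) p q ->
  disjoint_paths s t (msub_project p) (msub_project q).
Proof.
move/allP => disj_pq; apply/allP => v; rewrite mem_pverts_project => pv.
by have := disj_pq _ pv; rewrite mem_pverts_project.
Qed.

Lemma msub_disjoint_paths (lam : E -> nat) s t k :
  has_disjoint_paths sends (lam \o msub_orig) (Some s) (Some t) k ->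
  has_disjoint_paths ends lam s t k.
Proof.
case=> ps [size_ps ps_temporal ps_disjoint]; exists (map msub_project ps); split.
- by rewrite size_map.
- by apply/allP => _ /mapP[p ps_p ->]; apply/temporal_project/(allP ps_temporal).
- move=> i j lt_ik lt_jk neq_ij; rewrite !(nth_map [::]) ?size_ps //.
  exact/disjoint_project/ps_disjoint.
Qed.

Fixpoint msub_lift (u : V) (p : seq (E * V)) : seq (sedge * option V) :=
  if p is (e, v) :: p' then
    (if insub e is Some e' then
       if u == x then [:: (inl e, None); (inr e', Some v)]
       else [:: (inr e', None); (inl e, Some v)]
     else [:: (inl e, Some v)]) ++ msub_lift v p'
  else [::].

Lemma walk_lift u p : walk_ok ends u p -> walk_ok sends (Some u) (msub_lift u p).
Proof.
elim: p u => [//|[e v] p IHp] u /= /andP[join_e walk_p].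
case: insubP => [e' xy_e _ | nxy_e] /=; last by rewrite joins_msubE (negbTE nxy_e) join_e IHp.
have walk_lift_p := IHp v walk_p.
case/orP: (joins_xy_edge xy_e join_e) => /andP[/eqP eq_ux /eqP eq_vy]; subst u v.
  by rewrite eqxx /= !joins_msubE xy_e !eqxx /= walk_lift_p.
case: eqP => [eq_yx | _] /=; rewrite !joins_msubE xy_e !eqxx /=.
  have [Syx Sxy] : (Some y == Some x) /\ (Some x == Some y) by rewrite eq_yx eqxx.
  by rewrite Syx Sxy walk_lift_p.
exact: walk_lift_p.
Qed.

Lemma sorted_lift (lam : E -> nat) u p a :
  path leq a (map (fun st => lam st.1) p) ->
  path leq a (map (fun st => lam (msub_orig st.1)) (msub_lift u p)).
Proof.
elim: p u a => [//|[e v] p IHp] u a /= /andP[le_a lep].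
rewrite map_cat cat_path; case: insubP => [e' _ val_e' | _] /=; last by rewrite le_a IHp.
by case: (u == x) => /=; rewrite val_e' le_a leqnn IHp.
Qed.

Lemma last_lift u p :
  last (Some u) (map snd (msub_lift u p)) = Some (last u (map snd p)).
Proof.
elim: p u => [//|[e v] p IHp] u /=.
by rewrite map_cat last_cat -IHp; case: insub => // e'; case: (u == x).
Qed.

Lemma mem_lift_Some u p w :
  (Some w \in map snd (msub_lift u p)) = (w \in map snd p).
Proof.
elim: p u => [//|[e v] p IHp] u /=.
rewrite map_cat mem_cat IHp.
by case: insub => [e'|]; first case: (u == x); rewrite !inE.
Qed.

Lemma mem_lift_None u p :
  (None \in map snd (msub_lift u p)) = has (fun st => xy_edge ends x y st.1) p.
Proof.
elim: p u => [//|[e v] p IHp] u /=.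
rewrite map_cat mem_cat IHp; case: insubP => [e' xy_e _ | /negbTE->] /=; last by rewrite ?inE.
by rewrite xy_e; case: (u == x); rewrite !inE.
Qed.

Lemma walk_xy_edge_visits a p :
  walk_ok ends a p -> has (fun st => xy_edge ends x y st.1) p ->
  {subset [:: x; y] <= a :: map snd p}.
Proof.
elim: p a => [//|[e v] p IHp] a /= /andP[join_e walk_p] /orP[xy_e | has_xy] w.
  case/orP: (joins_xy_edge xy_e join_e) => /andP[/eqP-> /eqP->];
    by rewrite !inE => /orP[]/eqP->; rewrite eqxx ?orbT.
by move=> /(IHp _ walk_p has_xy) w_vp; rewrite in_cons w_vp orbT.
Qed.

Lemma uniq_lift u p :
  walk_ok ends u p -> uniq (u :: map snd p) ->
  uniq (Some u :: map snd (msub_lift u p)).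
Proof.
elim: p u => [//|[e v] p IHp] u /= /andP[join_e walk_p] /andP[uNvp uniq_vp].
have uniq_l : uniq (map snd (msub_lift v p)) by case/andP: (IHp v walk_p uniq_vp).
have [neq_uv uNp] : u != v /\ u \notin map snd p by apply/norP; rewrite -in_cons.
have neq_Suv : (Some u == Some v) = false := negbTE neq_uv.
have /andP[vNp _] := uniq_vp.
rewrite map_cat; case: insubP => [e' xy_e _ | _] /=.
  (* a path uses at most one [xy] edge, so the lifted path visits the new vertex once *)
  have NNl : None \notin map snd (msub_lift v p).
    rewrite mem_lift_None; apply: contraL uNvp => /(walk_xy_edge_visits walk_p) sub_xy.
    by case/orP: (joins_xy_edge xy_e join_e) => /andP[/eqP-> _]; rewrite sub_xy // !inE eqxx ?orbT.
  by case: (u == x); rewrite /= !inE !mem_lift_Some (negbTE NNl) neq_Suv (negbTE uNp) vNp uniq_l.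
by rewrite !inE !mem_lift_Some neq_Suv (negbTE uNp) vNp uniq_l.
Qed.

Lemma temporal_lift (lam : E -> nat) s t p :
  temporal_path ends lam s t p ->
  temporal_path sends (lam \o msub_orig) (Some s) (Some t) (msub_lift s p).
Proof.
have sorted_path0 (l : seq nat) : sorted leq l = path leq 0 l by case: l.
case/and4P => walk_p uniq_p /eqP last_p sorted_p; apply/and4P; split.
- exact: walk_lift.
- exact: uniq_lift.
- by rewrite last_lift last_p.
- by rewrite sorted_path0; apply: sorted_lift; rewrite -sorted_path0.
Qed.

Lemma msub_nonadjacent s t :
  ~ adjacent ends s t -> ~ adjacent sends (Some s) (Some t).
Proof.
move=> nadj_st [[e|e]]; rewrite joins_msubE //; last by rewrite !andbF.
by case: ifP => _; [rewrite !andbF | move=> join_e; apply: nadj_st; exists e].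
Qed.

Lemma xy_vertex_off_pair s t :
  loopless ends -> adjacent ends x y -> ~ adjacent ends s t ->
  exists2 w, w \in [:: x; y] & w \notin [:: s; t].
Proof.
move=> lless [e join_e] nadj_st.
have neq_xy := loopless_joins_neq lless join_e.
case x_st: (x \in [:: s; t]); last by exists x; rewrite ?x_st // inE eqxx.
exists y; first by rewrite !inE eqxx orbT.
apply/negP => y_st; move: x_st y_st; rewrite !inE.
case/orP=> /eqP eq_x /orP[]/eqP eq_y; rewrite eq_x eq_y ?eqxx in neq_xy join_e => //.
  by apply: nadj_st; exists e.
by apply: nadj_st; exists e; rewrite joinsC.
Qed.

Lemma msub_cut_le (lam : E -> nat) s t (S' : {set option V}) :
  loopless ends -> adjacent ends x y -> ~ adjacent ends s t ->
  temporal_cut sends (lam \o msub_orig) (Some s) (Some t) S' ->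
  exists2 S, temporal_cut ends lam s t S & #|S| <= #|S'|.
Proof.
move=> lless adj_xy nadj_st [sNS' tNS' no_path'].
have [w w_xy] := xy_vertex_off_pair lless adj_xy nadj_st.
rewrite !inE => /norP[neq_ws neq_wt].
pose S := if None \in S' then w |: [set v | Some v \in S'] else [set v | Some v \in S'].
have S'_S v : Some v \in S' -> v \in S.
  by rewrite /S; case: ifP; rewrite !inE => _ ->; rewrite ?orbT.
have S'_None : None \in S' -> w \in S by move=> NS'; rewrite /S NS' setU11.
exists S; last first.
  by rewrite card_set_option /S; case: ifP => _; rewrite // cardsU1 leq_add2r leq_b1.
split.
- by rewrite /S; case: ifP => _; rewrite !inE (negbTE sNS') // orbF eq_sym.
- by rewrite /S; case: ifP => _; rewrite !inE (negbTE tNS') // orbF eq_sym.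
case=> p /andP[temporal_p avoid_p]; apply: no_path'; exists (msub_lift s p).
rewrite (temporal_lift temporal_p) /= sNS'; apply/allP => -[v|].
  rewrite mem_lift_Some => v_p; apply: contra (S'_S v) _.
  by apply: (allP avoid_p); rewrite in_cons v_p orbT.
have /and4P[walk_p _ _ _] := temporal_p.
rewrite mem_lift_None => /(walk_xy_edge_visits walk_p) sub_xy.
by apply: contra S'_None _; apply: (allP avoid_p); apply: sub_xy.
Qed.

End Subdivision.

Theorem lemma2 (V E : finType) (ends : E -> V * V) (x y : V) :
  loopless ends ->
  adjacent ends x y ->
  ~ Mengerian ends ->
  ~ @Mengerian (option V : finType) (msub_edge ends x y) (@msub_ends V E ends x y).
Proof.
move=> lless adj_xy not_menger menger'; apply: not_menger => lam lam_gt0 s t neq_st nadj_st.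
pose lam' := lam \o @msub_orig V E ends x y.
have nadj'_st := msub_nonadjacent (x := x) (y := y) nadj_st.
have eq_pc' := menger' lam' (fun f => lam_gt0 _) (Some s) (Some t) neq_st nadj'_st.
have le_pmax : pmax (@msub_ends V E ends x y) lam' (Some s) (Some t) <= pmax ends lam s t.
  apply/bigmax_leqP => k /asboolP paths'_k.
  exact: leq_pmax neq_st nadj_st _ (msub_disjoint_paths paths'_k).
have le_cmin : cmin ends lam s t <= cmin (@msub_ends V E ends x y) lam' (Some s) (Some t).
  apply: leq_cmin => [|S' cut_S']; first by rewrite card_option ltnW // ltnS cmin_le_card.
  have [S cut_S le_S] := msub_cut_le lless adj_xy nadj_st cut_S'.
  exact: leq_trans (cmin_le_cut cut_S) le_S.
apply/eqP; rewrite eqn_leq pmax_le_cmin //.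
by rewrite (leq_trans le_cmin) // -eq_pc'.
Qed.
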